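(* Let $(K,v)$ be an extremal valued field with value group $\Gamma$. Then for every nonzero convex subgroup $\Delta$ of $\Gamma$, the quotient $\Gamma/\Delta$ is divisible.
   Context: $(K,v)$ with valuation ring $\mathcal{O}_v$ and value group $\Gamma$ (and $v(0)=\infty$) is extremal if for every $n\ge1$ and every $F\in K[X_1,\dots,X_n]$ the set $\{v(F(a_1,\dots,a_n)) : a_i\in\mathcal{O}_v\}\subseteq\Gamma\cup\{\infty\}$ has a maximal element. *)

From HB Require Import structures.
From mathcomp Require Import all_boot all_order all_algebra.
Set Implicit Arguments. Unset Strict Implicit. Unset Printing Implicit Defensive.
Import GRing.Theory.
Local Open Scope ring_scope.

Definition ordered_abgroup (G : zmodType) (le : rel G) : Prop :=
  [/\ (forall x, le x x),
      (forall x y z, le x y -> le y z -> le x z),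
      (forall x y, le x y -> le y x -> x = y),
      (forall x y, le x y \/ le y x) &
      (forall x y z, le x y -> le (x + z) (y + z))].

(* order on Gamma u {oo}, with None standing for oo (the top element) *)
Definition le_inf (G : Type) (le : rel G) (a b : option G) : Prop :=
  match a, b with
  | _, None => True
  | None, Some _ => False
  | Some x, Some y => le x y
  end.

Definition add_inf (G : zmodType) (a b : option G) : option G :=
  match a, b with
  | Some x, Some y => Some (x + y)
  | _, _ => None
  end.

Definition valuation (K : fieldType) (G : zmodType) (le : rel G)
    (v : K -> option G) : Prop :=
  [/\ (forall x, v x = None <-> x = 0),
      (forall x y, v (x * y) = add_inf (v x) (v y)),
      (forall x y, le_inf le (v x) (v (x + y)) \/ le_inf le (v y) (v (x + y))) &
      (forall g, exists x, v x = Some g)].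

Definition in_val_ring (K : fieldType) (G : zmodType) (le : rel G)
    (v : K -> option G) (x : K) : Prop := le_inf le (Some 0) (v x).

Inductive mpoly (K : Type) (n : nat) : Type :=
| MConst of K
| MVar of 'I_n
| MAdd of mpoly K n & mpoly K n
| MMul of mpoly K n & mpoly K n.

Fixpoint meval (K : fieldType) (n : nat) (F : mpoly K n) (a : 'I_n -> K) : K :=
  match F with
  | MConst c => c
  | MVar i => a i
  | MAdd F1 F2 => meval F1 a + meval F2 a
  | MMul F1 F2 => meval F1 a * meval F2 a
  end.

Definition extremal (K : fieldType) (G : zmodType) (le : rel G)
    (v : K -> option G) : Prop :=
  forall (n : nat), (1 <= n)%N -> forall F : mpoly K n,
    exists a : 'I_n -> K, (forall i, in_val_ring le v (a i)) /\
      forall b : 'I_n -> K, (forall i, in_val_ring le v (b i)) ->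
        le_inf le (v (meval F b)) (v (meval F a)).

Definition convex_subgroup (G : zmodType) (le : rel G) (D : G -> Prop) : Prop :=
  [/\ D 0,
      (forall x y, D x -> D y -> D (x - y)) &
      (forall x y z, D x -> D z -> le x y -> le y z -> D y)].

Definition quotient_divisible (G : zmodType) (D : G -> Prop) : Prop :=
  forall (n : nat) (g : G), (1 <= n)%N -> exists h : G, D (h *+ n - g).

From mathcomp Require Import all_boot all_order all_algebra.
From Stdlib Require Import Classical.
Import GRing.Theory.
Local Open Scope ring_scope.
Set Implicit Arguments. Unset Strict Implicit.

(* If Γ/Δ is not divisible, there are n >= 2 and g > 0 with g outside nΓ + Δ.
   Take v(s) = g, v(c2) = kappa = 2g - ng, v(c3) = tau = g - 2ng and
   P(x, y) = x^n + c2 y^n + c3 (xy - s)^n on O_v^2.  If v(xy) <> g the last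
   term dominates and v(P(x, y)) < 0 = v(P(1, s)).  If v(xy) = g and
   v(x) = a, the first two terms have the distinct values na and 2g - na, and
   the last term's value is congruent to g modulo nΓ, so it equals neither;
   hence v(P(x, y)) <= min(na, 2g - na).  Multiplying or dividing x by some t
   with 0 < v(t) = d in Δ, and moving along the curve xy = s, increases this
   minimum: na stays on the same side of g because, by convexity, nd is
   smaller than |g - na|, which lies outside Δ.  So v(P) attains no maximum on
   O_v^2, contradicting extremality. *)

Section OrderedAbGroup.
Variables (G : zmodType) (le : rel G).
Hypothesis ordG : ordered_abgroup le.
Local Notation lt x y := (~~ le y x).

Lemma og_le_refl x : le x x. Proof. by case: ordG. Qed.
Lemma og_le_trans x y z : le x y -> le y z -> le x z.
Proof. by case: ordG => _ trans _ _ _; apply: trans. Qed.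
Lemma og_le_anti x y : le x y -> le y x -> x = y.
Proof. by case: ordG => _ _ anti _ _; apply: anti. Qed.
Lemma og_le_total x y : le x y \/ le y x. Proof. by case: ordG. Qed.

Lemma og_leD2r x y z : le (x + z) (y + z) = le x y.
Proof.
have leD2r a b c : le a b -> le (a + c) (b + c) by case: ordG => _ _ _ _; apply.
by apply/idP/idP => [/(leD2r _ _ (- z))|]; rewrite ?addrK //; apply: leD2r.
Qed.
Lemma og_leD2l x y z : le (z + x) (z + y) = le x y.
Proof. by rewrite ![z + _]addrC og_leD2r. Qed.
Lemma og_ltD2r x y z : lt (x + z) (y + z) = lt x y. Proof. by rewrite og_leD2r. Qed.
Lemma og_ltD2l x y z : lt (z + x) (z + y) = lt x y. Proof. by rewrite og_leD2l. Qed.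
Lemma og_subr_ge0 x y : le x y = le 0 (y - x).
Proof. by rewrite -(og_leD2r x y (- x)) subrr. Qed.
Lemma og_subr_gt0 x y : lt x y = lt 0 (y - x).
Proof. by rewrite -(og_leD2r y x (- x)) subrr. Qed.
Lemma og_oppr_gt0 x : lt 0 (- x) = lt x 0.
Proof. by rewrite (og_subr_gt0 x) sub0r. Qed.

Lemma og_ltW x y : lt x y -> le x y.
Proof. by move/negP=> nyx; case: (og_le_total x y) => // /nyx. Qed.
Lemma og_le_lt_trans x y z : le x y -> lt y z -> lt x z.
Proof. by move=> lexy /negP nzy; apply/negP => /og_le_trans/(_ lexy). Qed.
Lemma og_lt_le_trans x y z : lt x y -> le y z -> lt x z.
Proof. by move=> /negP nyx leyz; apply/negP => lezx; apply/nyx/(og_le_trans leyz). Qed.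
Lemma og_lt_trans x y z : lt x y -> lt y z -> lt x z.
Proof. by move/og_ltW; apply: og_le_lt_trans. Qed.

Lemma og_ler_addl x y : le 0 y -> le x (x + y).
Proof. by rewrite -{1}(addr0 x) og_leD2l. Qed.
Lemma og_ltr_addl x y : lt 0 y -> lt x (x + y).
Proof. by rewrite -{2}(addr0 x) og_ltD2l. Qed.
Lemma og_ltr_addr x y : lt y 0 -> lt (x + y) x.
Proof. by rewrite -{1}(addr0 x) og_ltD2l. Qed.

Lemma og_mulrn_ge0 x n : le 0 x -> le 0 (x *+ n).
Proof.
move=> x_ge0; elim: n => [|n IHn]; first exact: og_le_refl.
by rewrite mulrS; apply: og_le_trans x_ge0 (og_ler_addl _ IHn).
Qed.
Lemma og_mulrn_gt0 x n : lt 0 x -> (0 < n)%N -> lt 0 (x *+ n).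
Proof.
move=> x_gt0; case: n => // n _; rewrite mulrS.
exact: og_lt_le_trans x_gt0 (og_ler_addl _ (og_mulrn_ge0 _ (og_ltW x_gt0))).
Qed.
Lemma og_ltr_mulrn x y n : lt x y -> (0 < n)%N -> lt (x *+ n) (y *+ n).
Proof. by rewrite og_subr_gt0 (og_subr_gt0 (x *+ n)) -mulrnBl; apply: og_mulrn_gt0. Qed.
Lemma og_ler_mulrn x y n : le x y -> le (x *+ n) (y *+ n).
Proof. by rewrite og_subr_ge0 (og_subr_ge0 (x *+ n)) -mulrnBl; apply: og_mulrn_ge0. Qed.
Lemma og_ltr_mulrn_inv x y n : lt (x *+ n) (y *+ n) -> lt x y.
Proof. by apply: contraNN; apply: og_ler_mulrn. Qed.

Lemma og_lt_total x y : x <> y -> lt x y \/ lt y x.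
Proof.
move=> neq_xy; case: (og_le_total x y) => [le_xy|le_yx].
  by left; apply/negP => /(og_le_anti le_xy).
by right; apply/negP => /og_le_anti/(_ le_yx).
Qed.

Lemma og_neq0_cases x : x <> 0 -> lt 0 x \/ lt 0 (- x).
Proof. by rewrite og_oppr_gt0 => /og_lt_total[]; [right | left]. Qed.
Lemma og_double_eq0 (x : G) : x + x = 0 -> x = 0.
Proof.
move=> xx0; case: (og_le_total 0 x) => [le_0x|le_x0].
  have le_x0 : le x 0 by rewrite -xx0 -{1}(addr0 x) og_leD2l.
  exact: og_le_anti.
have le_0x : le 0 x by rewrite -xx0 -{3}(addr0 x) og_leD2l.
exact: og_le_anti.
Qed.
End OrderedAbGroup.

Definition lt_inf (G : Type) (le : rel G) (a b : option G) : Prop :=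
  ~ le_inf le b a.

Section ExtendedOrder.
Variables (G : zmodType) (le : rel G).
Hypothesis ordG : ordered_abgroup le.
Local Notation "a <=oo b" := (le_inf le a b) (at level 70).
Local Notation "a <oo b" := (lt_inf le a b) (at level 70).

Lemma le_inf_refl a : a <=oo a.
Proof. by case: a => //= x; apply: og_le_refl. Qed.
Lemma le_inf_trans a b c : a <=oo b -> b <=oo c -> a <=oo c.
Proof. by case: a; case: b; case: c => //= x y z; apply: og_le_trans. Qed.
Lemma le_inf_anti a b : a <=oo b -> b <=oo a -> a = b.
Proof. by case: a; case: b => //= x y lexy leyx; rewrite (og_le_anti ordG leyx lexy). Qed.
Lemma le_inf_total a b : a <=oo b \/ b <=oo a.
Proof.
case: a => [x|]; case: b => [y|] /=; by [left | right | apply: og_le_total].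
Qed.

Lemma lt_infW a b : a <oo b -> a <=oo b.
Proof. by move=> ltab; case: (le_inf_total a b) => // /ltab. Qed.
Lemma le_lt_inf_trans a b c : a <=oo b -> b <oo c -> a <oo c.
Proof. by move=> leab ltbc leca; apply/ltbc/(le_inf_trans leca). Qed.
Lemma lt_le_inf_trans a b c : a <oo b -> b <=oo c -> a <oo c.
Proof. by move=> ltab lebc leca; apply/ltab/(le_inf_trans lebc). Qed.
Lemma lt_inf_Some x y : Some x <oo Some y <-> ~~ le y x.
Proof. by split => /negP. Qed.

Lemma lt_inf_trichotomy a b : a <oo b \/ a = b \/ b <oo a.
Proof.
case: (classic (b <=oo a)) => [leba|]; last by left.
case: (classic (a <=oo b)) => [leab|]; last by right; right.
by right; left; apply: le_inf_anti.
Qed.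
End ExtendedOrder.

Section Valuation.
Variables (K : fieldType) (G : zmodType) (le : rel G) (v : K -> option G).
Hypotheses (ordG : ordered_abgroup le) (valv : valuation le v).
Local Notation "a <=oo b" := (le_inf le a b) (at level 70).
Local Notation "a <oo b" := (lt_inf le a b) (at level 70).

Lemma val0 : v 0 = None. Proof. by case: valv => eq0 _ _ _; apply/(eq0 0). Qed.
Lemma val_None_eq0 x : v x = None -> x = 0. Proof. by case: valv => eq0 _ _ _ /eq0. Qed.
Lemma val_Some x : x != 0 -> exists a, v x = Some a.
Proof.
move=> /eqP x_neq0; case vx: (v x) => [a|]; first by exists a.
by case: x_neq0; apply: val_None_eq0.
Qed.
Lemma val_Some_neq0 x a : v x = Some a -> x != 0.
Proof. by apply: contra_eq_neq => ->; rewrite val0. Qed.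
Lemma valM x y : v (x * y) = add_inf (v x) (v y). Proof. by case: valv. Qed.
Lemma val_surj a : exists x, v x = Some a. Proof. by case: valv. Qed.

Lemma val1 : v 1 = Some 0.
Proof.
have := valM 1 1; rewrite mulr1.
case v1: (v 1) => [a|] /=; last by move/val_None_eq0/eqP: v1; rewrite oner_eq0.
by case=> /(congr1 (fun z => z - a)); rewrite addrK subrr => <-.
Qed.
Lemma valN x : v (- x) = v x.
Proof.
have vN1 : v (-1) = Some 0.
  have := valM (-1) (-1); rewrite mulrNN mulr1 val1.
  by case: (v (-1)) => [a|] //= [/esym/(og_double_eq0 ordG)->].
by rewrite -mulN1r valM vN1; case: (v x) => //= a; rewrite add0r.
Qed.
Lemma valX x a n : v x = Some a -> v (x ^+ n) = Some (a *+ n).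
Proof.
move=> vx; elim: n => [|n IHn]; first by rewrite expr0 mulr0n val1.
by rewrite exprS valM vx IHn /= mulrS.
Qed.
Lemma val_div x y a b :
  x != 0 -> v x = Some a -> v y = Some b -> v (y / x) = Some (b - a).
Proof.
move=> x_neq0 vx vy; have := valM x (y / x).
rewrite mulrC divfK // vy vx; case: (v (y / x)) => //= c [->].
by rewrite addrAC subrr add0r.
Qed.

Lemma valD_ltl x y : v x <oo v y -> v (x + y) = v x.
Proof.
move=> ltxy; have le_x_xy : v x <=oo v (x + y).
  case: valv => _ _ ultra _; case: (ultra x y) => // le_y_xy.
  exact/lt_infW/(lt_le_inf_trans ordG ltxy le_y_xy).
apply: (le_inf_anti ordG) => //; case: valv => _ _ ultra _.
by case: (ultra (x + y) (- y)); rewrite addrK ?valN // => /ltxy.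
Qed.
Lemma valD_ltr x y : v y <oo v x -> v (x + y) = v y.
Proof. by rewrite addrC; apply: valD_ltl. Qed.
Lemma valD_gt c x y : c <oo v x -> c <oo v y -> c <oo v (x + y).
Proof.
case: valv => _ _ ultra _ ltcx ltcy.
case: (ultra x y) => [le_x|le_y].
  exact: (lt_le_inf_trans ordG ltcx le_x).
exact: (lt_le_inf_trans ordG ltcy le_y).
Qed.
Lemma valD3_ltr x y z : v z <oo v x -> v z <oo v y -> v (x + y + z) = v z.
Proof. by move=> ltzx ltzy; apply/valD_ltr/valD_gt. Qed.
Lemma valD_neq_le x y : v y <> v x -> v (x + y) <=oo v x.
Proof.
move=> neq; case: (lt_inf_trichotomy ordG (v x) (v y)) => [lt|[eq|lt]].
- by rewrite valD_ltl //; exact: (le_inf_refl ordG).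
- by case: neq.
- by rewrite valD_ltr //; exact: (lt_infW ordG).
Qed.
End Valuation.

Section ConvexSubgroup.
Variables (G : zmodType) (le : rel G) (D : G -> Prop).
Hypotheses (ordG : ordered_abgroup le) (convD : convex_subgroup le D).
Local Notation lt x y := (~~ le y x).

Lemma cvx0 : D 0. Proof. by case: convD. Qed.
Lemma cvxB x y : D x -> D y -> D (x - y). Proof. by case: convD => _ + _; apply. Qed.
Lemma cvxN x : D x -> D (- x). Proof. by rewrite -sub0r; apply/cvxB/cvx0. Qed.
Lemma cvxD x y : D x -> D y -> D (x + y).
Proof. by move=> Dx /cvxN; rewrite -{2}(opprK y); apply: cvxB. Qed.
Lemma cvxMn x n : D x -> D (x *+ n).
Proof.
by move=> Dx; elim: n => [|n IHn]; [rewrite mulr0n; apply: cvx0 | rewrite mulrS; apply: cvxD].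
Qed.

Lemma cvx_lt_notin x y : lt 0 x -> ~ D x -> le 0 y -> D y -> lt y x.
Proof.
move=> x_gt0 Dx' y_ge0 Dy; apply/negP => le_xy; apply: Dx'.
by case: convD => _ _; apply; [exact: cvx0 | exact: Dy | exact: (og_ltW ordG x_gt0) |].
Qed.
End ConvexSubgroup.

Lemma mulf_neq0_factors (R : idomainType) (a b : R) :
  a * b != 0 -> a != 0 /\ b != 0.
Proof. by rewrite mulf_eq0 negb_or => /andP. Qed.

Definition Peval (K : fieldType) (n : nat) (s c2 c3 x y : K) : K :=
  x ^+ n + c2 * y ^+ n + c3 * (x * y - s) ^+ n.

Section NoMaximum.
Variables (G : zmodType) (le : rel G) (D : G -> Prop).
Hypotheses (ordG : ordered_abgroup le) (convD : convex_subgroup le D).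
Variables (n : nat) (g d : G).
Hypotheses (n_gt1 : (1 < n)%N) (g_gt0 : ~~ le g 0).
Hypothesis g_notin : forall h, ~ D (h *+ n - g).
Hypotheses (d_gt0 : ~~ le d 0) (Dd : D d).
Local Notation lt x y := (~~ le y x).
Local Notation N x := (x *+ n).

Definition gap := N g - g.
Definition tau := - N g - gap.
Definition kappa := g - gap.

Lemma n_gt0 : (0 < n)%N. Proof. exact: ltn_trans n_gt1. Qed.

Lemma gap_gt0 : lt 0 gap.
Proof.
rewrite /gap -(og_subr_gt0 ordG); case: n n_gt1 => [|[|m]] // _.
by rewrite mulrS og_ltr_addl // og_mulrn_gt0.
Qed.
Lemma Ngap_lt0 : lt (- gap) 0. Proof. by rewrite -(og_oppr_gt0 ordG) opprK gap_gt0. Qed.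
Lemma tau_addNg : tau + N g = - gap. Proof. by rewrite /tau addrAC addNr add0r. Qed.
Lemma Ngap_lt_kappa : lt (- gap) kappa.
Proof. by rewrite /kappa addrC (og_ltr_addl ordG). Qed.

Lemma tau_N_lt_Ngap w : lt w g -> lt (tau + N w) (- gap).
Proof. by move=> lt_wg; rewrite -tau_addNg og_ltD2l // og_ltr_mulrn // n_gt0. Qed.

Lemma tau_N_lt0 w : lt w g -> lt (tau + N w) 0.
Proof. by move=> lt_wg; apply: (og_lt_trans ordG (tau_N_lt_Ngap lt_wg) Ngap_lt0). Qed.
Lemma tau_N_lt_Nl a b : le 0 a -> le 0 b -> lt (a + b) g -> lt (tau + N (a + b)) (N a).
Proof.
move=> a_ge0 b_ge0 lt_abg; rewrite mulrnDl addrCA og_ltr_addr //.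
apply: tau_N_lt0; apply: (og_le_lt_trans ordG _ lt_abg).
by rewrite -{1}(add0r b) og_leD2r.
Qed.
Lemma tau_N_lt_kappa_Nr a b : le 0 a -> le 0 b -> lt (a + b) g ->
  lt (tau + N (a + b)) (kappa + N b).
Proof.
move=> a_ge0 b_ge0 lt_abg; rewrite mulrnDl addrA og_ltD2r //.
apply: (og_lt_trans ordG _ Ngap_lt_kappa); apply: tau_N_lt_Ngap.
by apply: (og_le_lt_trans ordG _ lt_abg); rewrite -{1}(addr0 a) og_leD2l.
Qed.
Lemma Ngap_lt_N a : le 0 a -> lt (- gap) (N a).
Proof. by move=> a_ge0; apply: (og_lt_le_trans ordG Ngap_lt0); apply: og_mulrn_ge0. Qed.
Lemma Ngap_lt_kappa_N b : le 0 b -> lt (- gap) (kappa + N b).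
Proof.
move=> b_ge0; apply: (og_lt_le_trans ordG Ngap_lt_kappa).
by apply: (og_ler_addl ordG); apply: (og_mulrn_ge0 ordG).
Qed.

Lemma kappa_curveE a : kappa + N (g - a) = g + (g - N a).
Proof.
by rewrite /kappa /gap mulrnBl opprB -addrA; congr (_ + _); rewrite addrA subrK.
Qed.
Lemma N_lt_kappa_curve a : lt (N a) g -> lt (N a) (kappa + N (g - a)).
Proof.
move=> lt_Nag; rewrite kappa_curveE; apply: (og_lt_trans ordG lt_Nag).
by apply: (og_ltr_addl ordG); rewrite -(og_subr_gt0 ordG).
Qed.
Lemma kappa_curve_lt_N a : lt g (N a) -> lt (kappa + N (g - a)) (N a).
Proof.
move=> lt_gNa; rewrite kappa_curveE; apply: (og_lt_trans ordG _ lt_gNa).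
by apply: (og_ltr_addr ordG); rewrite -(og_oppr_gt0 ordG) opprB -(og_subr_gt0 ordG).
Qed.

Lemma tauE : tau = g - N (g + g).
Proof. by rewrite /tau /gap mulrnDl opprB opprD addrCA. Qed.

Lemma Ng_neq h : N h <> g.
Proof. by move=> Nhg; apply: (g_notin (h := h)); rewrite Nhg subrr; apply: (cvx0 convD). Qed.
Lemma tau_N_neq_N w a : tau + N w <> N a.
Proof.
rewrite tauE => eq; apply: (@Ng_neq (a - w + (g + g))).
by rewrite mulrnDl mulrnBl -eq addrK subrK.
Qed.
Lemma tau_N_neq_kappa_curve w a : tau + N w <> kappa + N (g - a).
Proof.
rewrite tauE kappa_curveE -addrA => /addrI eq; apply: (@Ng_neq (w + a - (g + g))).
by rewrite mulrnBl mulrnDl addrAC [N w - _]addrC eq subrK.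
Qed.

Lemma Nd_lt_notin x : lt 0 x -> ~ D x -> lt (N d) x.
Proof.
move=> x_gt0 Dx'; apply: (cvx_lt_notin ordG convD x_gt0 Dx').
  exact/(og_mulrn_ge0 ordG)/(og_ltW ordG).
exact: (cvxMn convD).
Qed.

Lemma step_up a : le 0 a -> lt (N a) g ->
  [/\ le 0 (a + d), le (a + d) g, lt (N (a + d)) g & lt (N a) (N (a + d))].
Proof.
move=> a_ge0 lt_Nag.
have lt_Nd : lt (N d) (g - N a).
  apply: Nd_lt_notin; first by rewrite -(og_subr_gt0 ordG).
  by rewrite -opprB => /(cvxN convD); rewrite opprK; apply: g_notin.
have lt_Nadg : lt (N (a + d)) g.
  by move: lt_Nd; rewrite -(og_ltD2l ordG _ _ (N a)) addrCA subrr addr0 -mulrnDl.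
split=> //.
- exact: (og_le_trans ordG a_ge0 (og_ler_addl ordG a (og_ltW ordG d_gt0))).
- apply/(og_ltW ordG)/(og_ltr_mulrn_inv ordG (n := n)).
  apply: (og_lt_le_trans ordG lt_Nadg).
  by rewrite (og_subr_ge0 ordG); apply: (og_ltW ordG gap_gt0).
- by apply: (og_ltr_mulrn ordG) n_gt0; apply: (og_ltr_addl ordG).
Qed.

Lemma step_down a : lt g (N a) ->
  [/\ le 0 (a - d), le (a - d) a, lt g (N (a - d))
    & lt (kappa + N (g - a)) (kappa + N (g - (a - d)))].
Proof.
move=> lt_gNa.
have lt_Nd : lt (N d) (N a - g).
  by apply: Nd_lt_notin; [rewrite -(og_subr_gt0 ordG) | apply: g_notin].
have lt_gNad : lt g (N (a - d)).
  by rewrite mulrnBl (og_subr_gt0 ordG) addrAC -(og_subr_gt0 ordG).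
split=> //.
- apply/(og_ltW ordG)/(og_ltr_mulrn_inv ordG (n := n)).
  by rewrite mul0rn; apply: (og_lt_trans ordG g_gt0).
- by apply/(og_ltW ordG)/(og_ltr_addr ordG); rewrite -(og_oppr_gt0 ordG) opprK.
- rewrite (og_ltD2l ordG); apply: (og_ltr_mulrn ordG) n_gt0.
  by rewrite opprB addrCA addrC; apply: (og_ltr_addl ordG).
Qed.

Variables (K : fieldType) (v : K -> option G).
Hypothesis valv : valuation le v.
Variables (s c2 c3 t : K).
Hypotheses (vs : v s = Some g) (vc2 : v c2 = Some kappa) (vc3 : v c3 = Some tau).
Hypothesis vt : v t = Some d.
Local Notation O x := (in_val_ring le v x).
Local Notation "a <=oo b" := (le_inf le a b) (at level 70).
Local Notation "a <oo b" := (lt_inf le a b) (at level 70).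
Local Notation P := (Peval n s c2 c3).

Lemma zero_exprn : (0 : K) ^+ n = 0.
Proof. by rewrite expr0n eqn0Ngt n_gt0. Qed.

Lemma val_monomials a b x :
  v a = Some x -> v b = Some (g - x) ->
  (lt (N x) g -> v (a ^+ n + c2 * b ^+ n) = Some (N x)) /\
  (lt g (N x) -> v (a ^+ n + c2 * b ^+ n) = Some (kappa + N (g - x))).
Proof.
move=> va vb; have vaN := valX valv n va.
have vbN : v (c2 * b ^+ n) = Some (kappa + N (g - x)).
  by rewrite (valM valv) vc2 (valX valv n vb).
split=> [lt_Nxg|lt_gNx].
- by rewrite (valD_ltl ordG valv) vaN // vbN; apply/lt_inf_Some/N_lt_kappa_curve.
- by rewrite (valD_ltr ordG valv) vbN // vaN; apply/lt_inf_Some/kappa_curve_lt_N.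
Qed.

Lemma val_ring_Some x : O x -> x != 0 -> exists2 a, v x = Some a & le 0 a.
Proof. by move=> Ox /(val_Some valv) [a vx]; exists a; move: Ox; rewrite /in_val_ring vx. Qed.

Lemma Peval_curveE x : x != 0 -> P x (s / x) = x ^+ n + c2 * (s / x) ^+ n.
Proof.
by move=> x_neq0; rewrite /Peval [x * _]mulrC divfK // subrr zero_exprn mulr0 addr0.
Qed.

Lemma curve_point x a : x != 0 -> v x = Some a -> le 0 a -> le a g ->
  [/\ O x, O (s / x) & v (s / x) = Some (g - a)].
Proof.
move=> x_neq0 vx a_ge0 le_ag; have vsx := val_div valv x_neq0 vx vs.
by split; rewrite // /in_val_ring ?vx ?vsx //= -(og_subr_ge0 ordG).
Qed.

Lemma Peval_ref : v (P 1 s) = Some 0.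
Proof.
have vs0 : v s = Some (g - 0) by rewrite subr0.
have [low _] := val_monomials (val1 valv) vs0.
by rewrite /Peval mul1r subrr zero_exprn mulr0 addr0 low; rewrite mul0rn.
Qed.

Lemma Peval_below a b : O a -> O b -> v (a * b) <oo Some g -> v (P a b) <oo Some 0.
Proof.
move=> Oa Ob lt_abg.
have /mulf_neq0_factors[a_neq0 b_neq0] : a * b != 0.
  by apply/eqP => ab0; apply: lt_abg; rewrite ab0 (val0 valv).
have [x vax x_ge0] := val_ring_Some Oa a_neq0.
have [y vby y_ge0] := val_ring_Some Ob b_neq0.
have vab : v (a * b) = Some (x + y) by rewrite (valM valv) vax vby.
have lt_xyg : lt (x + y) g by apply/lt_inf_Some; rewrite -vab.
have vabs : v (a * b - s) = Some (x + y).
  by rewrite (valD_ltl ordG valv) // (valN ordG valv) vs vab; apply/lt_inf_Some.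
rewrite /Peval (valD3_ltr ordG valv) (valM valv) vc3 (valX valv n vabs) /=.
- exact/lt_inf_Some/tau_N_lt0.
- by rewrite (valX valv n vax); apply/lt_inf_Some/tau_N_lt_Nl.
- by rewrite (valM valv) vc2 (valX valv n vby); apply/lt_inf_Some/tau_N_lt_kappa_Nr.
Qed.

Lemma Ngap_lt_val_pow a : O a -> Some (- gap) <oo v (a ^+ n).
Proof.
have [->|a_neq0 Oa] := eqVneq a 0; first by rewrite zero_exprn (val0 valv) => _ [].
have [x vax x_ge0] := val_ring_Some Oa a_neq0.
by rewrite (valX valv n vax); apply/lt_inf_Some/Ngap_lt_N.
Qed.
Lemma Ngap_lt_val_c2pow b : O b -> Some (- gap) <oo v (c2 * b ^+ n).
Proof.
have [->|b_neq0 Ob] := eqVneq b 0; first by rewrite zero_exprn mulr0 (val0 valv) => _ [].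
have [y vby y_ge0] := val_ring_Some Ob b_neq0.
by rewrite (valM valv) vc2 (valX valv n vby); apply/lt_inf_Some/Ngap_lt_kappa_N.
Qed.

Lemma Peval_above a b : O a -> O b -> Some g <oo v (a * b) -> v (P a b) <oo Some 0.
Proof.
move=> Oa Ob lt_gab.
have vabs : v (a * b - s) = Some g.
  by rewrite (valD_ltr ordG valv) (valN ordG valv) vs.
rewrite /Peval (valD3_ltr ordG valv) (valM valv) vc3 (valX valv n vabs) /= ?tau_addNg.
- exact/lt_inf_Some/Ngap_lt0.
- exact: Ngap_lt_val_pow.
- exact: Ngap_lt_val_c2pow.
Qed.

Lemma val_Peval_le a b r :
  v (a ^+ n + c2 * b ^+ n) = Some r -> (forall w, tau + N w <> r) ->
  v (P a b) <=oo Some r.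
Proof.
move=> vm tau_neq; rewrite -vm /Peval; apply: (valD_neq_le ordG valv); rewrite vm.
have [->|e_neq0] := eqVneq (a * b - s) 0; first by rewrite zero_exprn mulr0 (val0 valv).
have [w vw] := val_Some valv e_neq0.
by rewrite (valM valv) vc3 (valX valv n vw) => -[/tau_neq].
Qed.

Lemma Peval_curve_below a b x : v a = Some x -> v b = Some (g - x) ->
  le 0 x -> lt (N x) g -> exists a' b', [/\ O a', O b' & v (P a b) <oo v (P a' b')].
Proof.
move=> vax vbx x_ge0 lt_Nxg.
have [xd_ge0 le_xdg lt_Nxdg lt_N] := step_up x_ge0 lt_Nxg.
have at_neq0 : a * t != 0.
  by rewrite mulf_neq0 ?(val_Some_neq0 valv vax) ?(val_Some_neq0 valv vt).
have vat : v (a * t) = Some (x + d) by rewrite (valM valv) vax vt.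
have [Oat Osat vsat] := curve_point at_neq0 vat xd_ge0 le_xdg.
exists (a * t), (s / (a * t)); split=> //.
rewrite Peval_curveE // (proj1 (val_monomials vat vsat) lt_Nxdg).
apply: (le_lt_inf_trans ordG (val_Peval_le _ (fun w => @tau_N_neq_N w x))).
  exact: (proj1 (val_monomials vax vbx) lt_Nxg).
exact/lt_inf_Some.
Qed.

Lemma Peval_curve_above a b x : v a = Some x -> v b = Some (g - x) ->
  le 0 x -> le x g -> lt g (N x) -> exists a' b', [/\ O a', O b' & v (P a b) <oo v (P a' b')].
Proof.
move=> vax vbx x_ge0 le_xg lt_gNx.
have [xd_ge0 le_xdx lt_gNxd lt_kappa] := step_down lt_gNx.
have t_neq0 := val_Some_neq0 valv vt.
have at_neq0 : a / t != 0 by rewrite mulf_neq0 ?invr_neq0 ?(val_Some_neq0 valv vax).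
have vat : v (a / t) = Some (x - d) by apply: (val_div valv t_neq0 vt vax).
have [Oat Osat vsat] := curve_point at_neq0 vat xd_ge0 (og_le_trans ordG le_xdx le_xg).
exists (a / t), (s / (a / t)); split=> //.
rewrite Peval_curveE // (proj2 (val_monomials vat vsat) lt_gNxd).
apply: (le_lt_inf_trans ordG (val_Peval_le _ (fun w => @tau_N_neq_kappa_curve w x))).
  exact: (proj2 (val_monomials vax vbx) lt_gNx).
exact/lt_inf_Some.
Qed.

Lemma Peval_on_curve a b : O a -> O b -> v (a * b) = Some g ->
  exists a' b', [/\ O a', O b' & v (P a b) <oo v (P a' b')].
Proof.
move=> Oa Ob vab.
have /mulf_neq0_factors[a_neq0 b_neq0] := val_Some_neq0 valv vab.
have [x vax x_ge0] := val_ring_Some Oa a_neq0.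
have [y vby y_ge0] := val_ring_Some Ob b_neq0.
have xyg : x + y = g by move: vab; rewrite (valM valv) vax vby => -[].
have vbx : v b = Some (g - x) by rewrite -xyg [x + y]addrC addrK.
have le_xg : le x g by rewrite (og_subr_ge0 ordG) -xyg [x + y]addrC addrK.
case: (og_lt_total ordG (@Ng_neq x)) => [lt_Nxg|lt_gNx].
- exact: Peval_curve_below vax vbx x_ge0 lt_Nxg.
- exact: Peval_curve_above vax vbx x_ge0 le_xg lt_gNx.
Qed.

Lemma Peval_no_max a b : O a -> O b ->
  exists a' b', [/\ O a', O b' & v (P a b) <oo v (P a' b')].
Proof.
move=> Oa Ob.
have O1 : O 1 by rewrite /in_val_ring (val1 valv); apply: og_le_refl.
have Os : O s by rewrite /in_val_ring vs; apply: (og_ltW ordG g_gt0).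
have to_ref : v (P a b) <oo Some 0 ->
    exists a' b', [/\ O a', O b' & v (P a b) <oo v (P a' b')].
  by move=> lt0; exists 1, s; rewrite Peval_ref.
case: (lt_inf_trichotomy ordG (v (a * b)) (Some g)) => [lt_abg|[vab|lt_gab]].
- exact/to_ref/Peval_below.
- exact: Peval_on_curve.
- exact/to_ref/Peval_above.
Qed.
End NoMaximum.

Fixpoint mpow (K : fieldType) (n : nat) (F : mpoly K n) (k : nat) : mpoly K n :=
  if k is k'.+1 then MMul F (mpow F k') else MConst n 1.

Lemma meval_mpow (K : fieldType) n (F : mpoly K n) k a :
  meval (mpow F k) a = meval F a ^+ k.
Proof. by elim: k => [|k IHk] /=; rewrite ?expr0 // exprS IHk. Qed.

Definition Ppoly (K : fieldType) (n : nat) (s c2 c3 : K) : mpoly K 2 :=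
  let X := MVar K ord0 in let Y := MVar K ord_max in
  MAdd (MAdd (mpow X n) (MMul (MConst 2 c2) (mpow Y n)))
       (MMul (MConst 2 c3) (mpow (MAdd (MMul X Y) (MConst 2 (- s))) n)).

Lemma meval_Ppoly (K : fieldType) n (s c2 c3 : K) a :
  meval (Ppoly n s c2 c3) a = Peval n s c2 c3 (a ord0) (a ord_max).
Proof. by rewrite /= !meval_mpow. Qed.

Section Reduction.
Variables (G : zmodType) (le : rel G) (D : G -> Prop).
Hypotheses (ordG : ordered_abgroup le) (convD : convex_subgroup le D).
Local Notation lt x y := (~~ le y x).

Lemma quotient_divisible_pos :
  (forall n g, (1 < n)%N -> lt 0 g -> exists h, D (h *+ n - g)) -> quotient_divisible D.
Proof.
move=> div_pos n g; rewrite leq_eqVlt => /orP[/eqP<-|n_gt1].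
  by exists g; rewrite mulr1n subrr; exact: (cvx0 convD).
have [->|/eqP g_neq0] := eqVneq g 0.
  by exists 0; rewrite mul0rn subrr; exact: (cvx0 convD).
case: (og_neq0_cases ordG g_neq0) => [/(div_pos n _ n_gt1)//|].
move=> /(div_pos n _ n_gt1)[h Dh]; exists (- h).
by rewrite mulNrn -opprD; apply: (cvxN convD); rewrite -[g]opprK.
Qed.

Lemma convex_subgroup_pos : (exists d, D d /\ d <> 0) -> exists2 d, lt 0 d & D d.
Proof.
move=> [d [Dd d_neq0]]; case: (og_neq0_cases ordG d_neq0) => d_gt0.
  by exists d.
by exists (- d); last by apply: (cvxN convD).
Qed.
End Reduction.

Theorem proposition3p5 (K : fieldType) (G : zmodType) (le : rel G)
    (v : K -> option G) :
  ordered_abgroup le -> valuation le v -> extremal le v ->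
  forall D : G -> Prop, convex_subgroup le D -> (exists d, D d /\ d <> 0) ->
  quotient_divisible D.
Proof.
move=> ordG valv extv D convD /(convex_subgroup_pos ordG convD)[d d_gt0 Dd].
apply: (quotient_divisible_pos ordG convD) => n g n_gt1 g_gt0.
apply: NNPP => no_root.
have g_notin h : ~ D (h *+ n - g) by move=> Dh; apply: no_root; exists h.
have [s vs] := val_surj valv g.
have [c2 vc2] := val_surj valv (kappa n g).
have [c3 vc3] := val_surj valv (tau n g).
have [t vt] := val_surj valv d.
have [a [Oa amax]] := extv 2%N isT (Ppoly n s c2 c3).
have [a' [b' [Oa' Ob' lt_ab]]] := Peval_no_max ordG convD n_gt1 g_gt0 g_notin
  d_gt0 Dd valv vs vc2 vc3 vt (Oa ord0) (Oa ord_max).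
pose b (i : 'I_2) := if i == ord0 then a' else b'.
have Ob i : in_val_ring le v (b i) by rewrite /b; case: ifP.
by apply: lt_ab; have := amax b Ob; rewrite !meval_Ppoly.
Qed.
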